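(* Let $\mathcal{C}$ be a category with pushouts and pullbacks, equipped with a costable factorisation system $(\mathcal{E},\mathcal{M})$. Let $\mathcal{A}$ be a subcategory of $\mathcal{C}$ containing all isomorphisms and stable under pullback. Suppose that for every cospan $X\xrightarrow{f}A\xleftarrow{g}Y$ in $\mathcal{A}$, with pullback span $X\leftarrow P\rightarrow Y$ (in $\mathcal{C}$) and pushout $X\to Q\leftarrow Y$ of that span (in $\mathcal{C}$), the unique induced morphism $Q\to A$ lies in $\mathcal{M}$. Then mapping a span $X\xleftarrow{f}N\xrightarrow{g}Y$ with $f,g\in\mathcal{A}$ to the corelation represented by its pushout cospan in $\mathcal{C}$ defines an identity-on-objects functor $\Pi\colon \mathrm{Span}(\mathcal{A}) \to \mathrm{Corel}(\mathcal{C})$.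
   Context: Composition is written diagrammatically ($f;g$ means first $f$, then $g$). A factorisation system $(\mathcal{E},\mathcal{M})$ on $\mathcal{C}$: subcategories containing all isomorphisms such that every morphism factors as $e;m$ with $e\in\mathcal{E}$, $m\in\mathcal{M}$, with the unique diagonal fill-in property (given $f=e;m$, $f'=e';m'$ and $u,v$ with $f;v=u;f'$, there is a unique $s$ with $e;s=u;e'$, $m;v=s;m'$). Costable: $\mathcal{M}$ is stable under pushout (in a pushout square, if a morphism out of the apex is in $\mathcal{M}$, so is the opposite side). $\mathcal{A}$ stable under pullback: in a pullback square in $\mathcal{C}$, if a morphism into the corner lies in $\mathcal{A}$ then so does the opposite side. $\mathrm{Span}(\mathcal{C})$ has the objects of $\mathcal{C}$ and morphisms isomorphism classes of spans, composed by pullback; $\mathrm{Span}(\mathcal{A})$ is its subcategory of spans both of whose legs lie in $\mathcal{A}$. $\mathrm{Corel}(\mathcal{C})$ has the objects of $\mathcal{C}$ and morphisms $X\to Y$ the equivalence classes of cospans $X\xrightarrow{f}N\xleftarrow{g}Y$ under the equivalence relation generated by relating it to $X\xrightarrow{f'}N'\xleftarrow{g'}Y$ whenever there is $m\colon N\to N'$ in $\mathcal{M}$ with $f;m=f'$, $g;m=g'$; composition by pushout of representatives. *)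

From Stdlib Require Import Relations.Relation_Operators.

Set Implicit Arguments.
Unset Strict Implicit.

(* A category; composition is diagrammatic: comp f g = "f ; g" (first f, then g). *)
Record Category := {
  Ob :> Type;
  Hom : Ob -> Ob -> Type;
  idm : forall X, Hom X X;
  comp : forall X Y Z, Hom X Y -> Hom Y Z -> Hom X Z;
  comp_idl : forall X Y (f : Hom X Y), comp (idm X) f = f;
  comp_idr : forall X Y (f : Hom X Y), comp f (idm Y) = f;
  comp_assoc : forall W X Y Z (f : Hom W X) (g : Hom X Y) (h : Hom Y Z),
      comp (comp f g) h = comp f (comp g h)
}.

Arguments Hom : clear implicits.
Arguments idm {c} X.
Arguments comp {c X Y Z} f g.
Notation "f ;; g" := (comp f g) (at level 40, left associativity).

Section Defs.
Variable C : Category.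

Definition MorClass := forall X Y : C, Hom C X Y -> Prop.

Definition is_iso (X Y : C) (f : Hom C X Y) : Prop :=
  exists g : Hom C Y X, f ;; g = idm X /\ g ;; f = idm Y.

Definition subcat_with_isos (P : MorClass) : Prop :=
  (forall X Y (f : Hom C X Y), is_iso f -> P X Y f) /\
  (forall X Y Z (f : Hom C X Y) (g : Hom C Y Z), P X Y f -> P Y Z g -> P X Z (f ;; g)).

Definition is_pushout (X A B Q : C) (f : Hom C X A) (g : Hom C X B)
    (i : Hom C A Q) (j : Hom C B Q) : Prop :=
  f ;; i = g ;; j /\
  forall (Z : C) (u : Hom C A Z) (v : Hom C B Z), f ;; u = g ;; v ->
    exists! h : Hom C Q Z, i ;; h = u /\ j ;; h = v.

Definition is_pullback (A B X P : C) (f : Hom C A X) (g : Hom C B X)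
    (p : Hom C P A) (q : Hom C P B) : Prop :=
  p ;; f = q ;; g /\
  forall (Z : C) (u : Hom C Z A) (v : Hom C Z B), u ;; f = v ;; g ->
    exists! h : Hom C Z P, h ;; p = u /\ h ;; q = v.

Definition has_pushouts : Prop :=
  forall (X A B : C) (f : Hom C X A) (g : Hom C X B),
    exists (Q : C) (i : Hom C A Q) (j : Hom C B Q), is_pushout f g i j.

Definition has_pullbacks : Prop :=
  forall (A B X : C) (f : Hom C A X) (g : Hom C B X),
    exists (P : C) (p : Hom C P A) (q : Hom C P B), is_pullback f g p q.

Definition factorisation_system (E M : MorClass) : Prop :=
  subcat_with_isos E /\ subcat_with_isos M /\
  (forall X Y (f : Hom C X Y), exists (N : C) (e : Hom C X N) (m : Hom C N Y),
      E X N e /\ M N Y m /\ f = e ;; m) /\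
  (forall X Y X' Y' N N' (f : Hom C X Y) (f' : Hom C X' Y')
      (e : Hom C X N) (m : Hom C N Y) (e' : Hom C X' N') (m' : Hom C N' Y')
      (u : Hom C X X') (v : Hom C Y Y'),
      E X N e -> M N Y m -> E X' N' e' -> M N' Y' m' ->
      f = e ;; m -> f' = e' ;; m' -> f ;; v = u ;; f' ->
      exists! s : Hom C N N', e ;; s = u ;; e' /\ m ;; v = s ;; m').

(* M stable under pushout: in a pushout square, if a morphism out of the apex
   (here f) is in M then so is the opposite side (here j). The other case is
   the same statement applied to the transposed square. *)
Definition stable_under_pushout (M : MorClass) : Prop :=
  forall (X A B Q : C) (f : Hom C X A) (g : Hom C X B) (i : Hom C A Q) (j : Hom C B Q),
    is_pushout f g i j -> M X A f -> M B Q j.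

Definition stable_under_pullback (A : MorClass) : Prop :=
  forall (Y Z X P : C) (f : Hom C Y X) (g : Hom C Z X) (p : Hom C P Y) (q : Hom C P Z),
    is_pullback f g p q -> A Z X g -> A P Y p.

Record Span (X Y : C) := { sapex : C; sl : Hom C sapex X; sr : Hom C sapex Y }.
Record Cospan (X Y : C) := { capex : C; cl : Hom C X capex; cr : Hom C Y capex }.

Definition id_span (X : C) : Span X X := {| sapex := X; sl := idm X; sr := idm X |}.
Definition id_cospan (X : C) : Cospan X X := {| capex := X; cl := idm X; cr := idm X |}.

Definition span_in (A : MorClass) (X Y : C) (s : Span X Y) : Prop :=
  A _ _ (sl s) /\ A _ _ (sr s).

(* isomorphism of spans (morphisms of Span(C) are iso classes of spans) *)
Definition span_iso (X Y : C) (s s' : Span X Y) : Prop :=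
  exists h : Hom C (sapex s) (sapex s'), is_iso h /\ h ;; sl s' = sl s /\ h ;; sr s' = sr s.

Definition is_span_composite (X Y Z : C) (s1 : Span X Y) (s2 : Span Y Z) (s : Span X Z) : Prop :=
  exists (p : Hom C (sapex s) (sapex s1)) (q : Hom C (sapex s) (sapex s2)),
    is_pullback (sr s1) (sl s2) p q /\ sl s = p ;; sl s1 /\ sr s = q ;; sr s2.

Definition is_cospan_composite (X Y Z : C) (c1 : Cospan X Y) (c2 : Cospan Y Z) (c : Cospan X Z) : Prop :=
  exists (i : Hom C (capex c1) (capex c)) (j : Hom C (capex c2) (capex c)),
    is_pushout (cr c1) (cl c2) i j /\ cl c = cl c1 ;; i /\ cr c = cr c2 ;; j.

Definition pushout_cospan_of (X Y : C) (s : Span X Y) (c : Cospan X Y) : Prop :=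
  is_pushout (sl s) (sr s) (cl c) (cr c).

Definition corel_step (M : MorClass) (X Y : C) (c c' : Cospan X Y) : Prop :=
  exists m : Hom C (capex c) (capex c'), M _ _ m /\ cl c ;; m = cl c' /\ cr c ;; m = cr c'.

(* equality of morphisms of Corel(C): the equivalence relation generated *)
Definition corel_eq (M : MorClass) (X Y : C) : Cospan X Y -> Cospan X Y -> Prop :=
  clos_refl_sym_trans (Cospan X Y) (@corel_step M X Y).

End Defs.

(* Pushout cospans of isomorphic spans are isomorphic, and isomorphisms lie in M, so the
   assignment is well defined and preserves identities. For composition, let
   X <- N1 -> Y <- N2 -> Z be composable spans in A with pullback P, let W be the pushout
   of N1 <- P -> N2 and h : W -> Y the induced map, which lies in M by hypothesis. The
   composite Q of the two pushout cospans is the colimit of the zigzag, and it is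
   obtained from the pushout R of the composite span by pushing out along h. Hence the
   comparison map R -> Q is a pushout of h, and lies in M by costability. *)
From Stdlib Require Import Relations.Relation_Operators.

Section Pushouts.
Context {C : Category}.

Lemma comp_eq_postcomp {X Y Y' Z W : C} {f : Hom C X Y} {g : Hom C Y Z}
    {f' : Hom C X Y'} {g' : Hom C Y' Z} (h : Hom C Z W) :
  f ;; g = f' ;; g' -> f ;; (g ;; h) = f' ;; (g' ;; h).
Proof. intros E. now rewrite <- !comp_assoc, E. Qed.

Section OnePushout.
Context {X A B Q : C} {f : Hom C X A} {g : Hom C X B} {i : Hom C A Q} {j : Hom C B Q}.

Lemma is_pushoutI :
  f ;; i = g ;; j ->
  (forall T (u : Hom C A T) (v : Hom C B T), f ;; u = g ;; v ->
     exists h, i ;; h = u /\ j ;; h = v) ->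
  (forall T (h h' : Hom C Q T), i ;; h = i ;; h' -> j ;; h = j ;; h' -> h = h') ->
  is_pushout f g i j.
Proof.
  intros Hcomm Hfactor Hepi. split; [exact Hcomm|].
  intros T u v Huv. destruct (Hfactor T u v Huv) as [h [Hu Hv]].
  exists h. split; [now split|].
  intros h' [Hu' Hv']. apply Hepi; congruence.
Qed.

Hypothesis Hpo : is_pushout f g i j.

Lemma pushout_comm : f ;; i = g ;; j.
Proof. exact (proj1 Hpo). Qed.

Lemma pushout_factor {T : C} (u : Hom C A T) (v : Hom C B T) :
  f ;; u = g ;; v -> exists h, i ;; h = u /\ j ;; h = v.
Proof.
  intros Huv. destruct (proj2 Hpo T u v Huv) as [h [Hh _]]. now exists h.
Qed.

Lemma pushout_jointly_epi {T : C} (h h' : Hom C Q T) :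
  i ;; h = i ;; h' -> j ;; h = j ;; h' -> h = h'.
Proof.
  intros Hi Hj.
  destruct (proj2 Hpo T (i ;; h) (j ;; h)) as [k [_ Hk]].
  { now rewrite <- !comp_assoc, pushout_comm. }
  transitivity k; [symmetry|]; apply Hk; split; auto.
Qed.

End OnePushout.

Lemma pushout_unique_iso {X A B Q Q' : C} {f : Hom C X A} {g : Hom C X B}
    {i : Hom C A Q} {j : Hom C B Q} {i' : Hom C A Q'} {j' : Hom C B Q'} :
  is_pushout f g i j -> is_pushout f g i' j' ->
  exists m, is_iso m /\ i ;; m = i' /\ j ;; m = j'.
Proof.
  intros Hpo Hpo'.
  destruct (pushout_factor Hpo i' j' (pushout_comm Hpo')) as [m [Hmi Hmj]].
  destruct (pushout_factor Hpo' i j (pushout_comm Hpo)) as [n [Hni Hnj]].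
  exists m. split; [|now split]. exists n. split.
  - apply (pushout_jointly_epi Hpo); rewrite <- comp_assoc, comp_idr; congruence.
  - apply (pushout_jointly_epi Hpo'); rewrite <- comp_assoc, comp_idr; congruence.
Qed.

Lemma pushout_precomp_iso {X' X A B Q : C} {h : Hom C X' X} {f : Hom C X A}
    {g : Hom C X B} {i : Hom C A Q} {j : Hom C B Q} :
  is_iso h -> is_pushout f g i j -> is_pushout (h ;; f) (h ;; g) i j.
Proof.
  intros [k [Hhk Hkh]] Hpo. apply is_pushoutI.
  - now rewrite !comp_assoc, (pushout_comm Hpo).
  - intros T u v Huv. apply (pushout_factor Hpo).
    rewrite <- (comp_idl f), <- (comp_idl g), <- Hkh, !comp_assoc.
    now rewrite <- !(comp_assoc h), Huv.
  - intros T. apply (pushout_jointly_epi Hpo).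
Qed.

Lemma id_cospan_pushout (X : C) : pushout_cospan_of (id_span X) (id_cospan X).
Proof.
  apply is_pushoutI; simpl.
  - reflexivity.
  - intros T u v Huv. rewrite !comp_idl in Huv. exists u. now rewrite !comp_idl.
  - intros T h h'. now rewrite !comp_idl.
Qed.

Lemma pushout_cospans_corel_eq {M : MorClass C} {X Y : C} {s : Span X Y}
    {c c' : Cospan X Y} :
  (forall U V (m : Hom C U V), is_iso m -> M U V m) ->
  pushout_cospan_of s c -> pushout_cospan_of s c' -> corel_eq M c c'.
Proof.
  intros HMiso Hc Hc'.
  destruct (pushout_unique_iso Hc Hc') as [m [Hm [Hml Hmr]]].
  apply rst_step. exists m. auto.
Qed.

Section Zigzag.
Context {X Y Z N1 N2 Q1 Q2 Q : C}
  {f1 : Hom C N1 X} {g1 : Hom C N1 Y} {f2 : Hom C N2 Y} {g2 : Hom C N2 Z}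
  {i1 : Hom C X Q1} {j1 : Hom C Y Q1} {i2 : Hom C Y Q2} {j2 : Hom C Z Q2}
  {k1 : Hom C Q1 Q} {k2 : Hom C Q2 Q}.
Hypotheses (HQ1 : is_pushout f1 g1 i1 j1) (HQ2 : is_pushout f2 g2 i2 j2)
  (HQ : is_pushout j1 i2 k1 k2).

Lemma zigzag_factor {T : C} (x : Hom C X T) (y : Hom C Y T) (z : Hom C Z T) :
  f1 ;; x = g1 ;; y -> f2 ;; y = g2 ;; z ->
  exists t, i1 ;; k1 ;; t = x /\ j1 ;; k1 ;; t = y /\ j2 ;; k2 ;; t = z.
Proof.
  intros Hxy Hyz.
  destruct (pushout_factor HQ1 x y Hxy) as [t1 [Ht1x Ht1y]].
  destruct (pushout_factor HQ2 y z Hyz) as [t2 [Ht2y Ht2z]].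
  destruct (pushout_factor HQ t1 t2 (eq_trans Ht1y (eq_sym Ht2y))) as [t [Ht1 Ht2]].
  exists t. rewrite !comp_assoc, Ht1, Ht2. auto.
Qed.

Lemma zigzag_jointly_epi {T : C} (t t' : Hom C Q T) :
  i1 ;; k1 ;; t = i1 ;; k1 ;; t' -> j1 ;; k1 ;; t = j1 ;; k1 ;; t' ->
  j2 ;; k2 ;; t = j2 ;; k2 ;; t' -> t = t'.
Proof.
  rewrite !comp_assoc. intros Hx Hy Hz.
  assert (Hy' : i2 ;; (k2 ;; t) = i2 ;; (k2 ;; t')).
  { now rewrite <- !comp_assoc, <- (pushout_comm HQ), !comp_assoc. }
  apply (pushout_jointly_epi HQ).
  - now apply (pushout_jointly_epi HQ1).
  - now apply (pushout_jointly_epi HQ2).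
Qed.

Context {P W R : C} {p : Hom C P N1} {q : Hom C P N2}
  {u : Hom C N1 W} {v : Hom C N2 W} {h : Hom C W Y} {a : Hom C X R} {b : Hom C Z R}.
Hypotheses (Hsquare : p ;; g1 = q ;; f2) (HW : is_pushout p q u v)
  (Hhu : u ;; h = g1) (Hhv : v ;; h = f2) (HR : is_pushout (p ;; f1) (q ;; g2) a b).

Lemma zigzag_pushout_along_comparison :
  exists (w : Hom C W R) (m : Hom C R Q),
    is_pushout h w (j1 ;; k1) m /\ a ;; m = i1 ;; k1 /\ b ;; m = j2 ;; k2.
Proof.
  destruct (pushout_factor HW (f1 ;; a) (g2 ;; b)) as [w [Hwu Hwv]].
  { rewrite <- !comp_assoc. exact (pushout_comm HR). }
  destruct (pushout_factor HR (i1 ;; k1) (j2 ;; k2)) as [m [Hma Hmb]].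
  { rewrite !comp_assoc, (comp_eq_postcomp k1 (pushout_comm HQ1)),
      <- (comp_assoc p), Hsquare, comp_assoc, (pushout_comm HQ).
    now rewrite (comp_eq_postcomp k2 (pushout_comm HQ2)). }
  exists w, m. split; [|now split].
  apply is_pushoutI.
  - apply (pushout_jointly_epi HW); rewrite <- !comp_assoc.
    + rewrite Hhu, Hwu, (comp_assoc f1 a m), Hma, <- comp_assoc.
      now rewrite (pushout_comm HQ1).
    + rewrite Hhv, Hwv, (comp_assoc g2 b m), Hmb, (comp_assoc f2 j1 k1), (pushout_comm HQ).
      now rewrite <- !comp_assoc, (pushout_comm HQ2).
  - intros T y r Hyr.
    destruct (zigzag_factor (a ;; r) y (b ;; r)) as [t [Htx [Hty Htz]]].
    + now rewrite <- comp_assoc, <- Hwu, comp_assoc, <- Hyr, <- comp_assoc, Hhu.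
    + now rewrite <- comp_assoc, <- Hwv, comp_assoc, <- Hyr, <- comp_assoc, Hhv.
    + exists t. split; [exact Hty|].
      apply (pushout_jointly_epi HR); rewrite <- comp_assoc; [rewrite Hma | rewrite Hmb];
        assumption.
  - intros T t t' Hy Hr. apply zigzag_jointly_epi; [| exact Hy |].
    + now rewrite <- Hma, !comp_assoc, Hr.
    + now rewrite <- Hmb, !comp_assoc, Hr.
Qed.

End Zigzag.
End Pushouts.

Theorem proposition2p9 (C : Category) (E M A : MorClass C) :
  has_pushouts C -> has_pullbacks C ->
  factorisation_system E M -> stable_under_pushout M ->
  subcat_with_isos A -> stable_under_pullback A ->
  (forall (X Y Z P Q : C) (f : Hom C X Z) (g : Hom C Y Z)
      (p : Hom C P X) (q : Hom C P Y) (i : Hom C X Q) (j : Hom C Y Q) (h : Hom C Q Z),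
      A _ _ f -> A _ _ g -> is_pullback f g p q -> is_pushout p q i j ->
      i ;; h = f -> j ;; h = g -> M _ _ h) ->
  (* well defined on morphisms of Span(A) (iso classes), independently of the chosen pushout *)
  (forall (X Y : C) (s s' : Span X Y) (c c' : Cospan X Y),
      span_in A s -> span_in A s' -> span_iso s s' ->
      pushout_cospan_of s c -> pushout_cospan_of s' c' -> corel_eq M c c') /\
  (* preserves identities *)
  (forall (X : C) (c : Cospan X X),
      pushout_cospan_of (id_span X) c -> corel_eq M c (id_cospan X)) /\
  (* preserves composition *)
  (forall (X Y Z : C) (s1 : Span X Y) (s2 : Span Y Z) (s : Span X Z)
      (c1 : Cospan X Y) (c2 : Cospan Y Z) (c12 c : Cospan X Z),
      span_in A s1 -> span_in A s2 -> is_span_composite s1 s2 s ->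
      pushout_cospan_of s1 c1 -> pushout_cospan_of s2 c2 ->
      is_cospan_composite c1 c2 c12 -> pushout_cospan_of s c ->
      corel_eq M c12 c).
Proof.
  (* Composites in Span(A) are supplied rather than constructed. *)
  intros Hpushouts _ [_ [[HMiso _] _]] HMcostable _ _ HcompM.
  split; [|split].
  - intros X Y s s' c c' _ _ [h [Hh [Hl Hr]]] Hc Hc'.
    apply (pushout_cospans_corel_eq (s := s)); [exact HMiso | exact Hc |].
    unfold pushout_cospan_of. rewrite <- Hl, <- Hr.
    exact (pushout_precomp_iso Hh Hc').
  - intros X c Hc.
    exact (pushout_cospans_corel_eq HMiso Hc (id_cospan_pushout X)).
  - intros X Y Z [N1 f1 g1] [N2 f2 g2] [P l r] [Q1 i1 j1] [Q2 i2 j2] [Q x z] [R a b]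
      [_ Hg1] [Hf2 _] [p [q [Hpb [El Er]]]] HQ1 HQ2 [k1 [k2 [HQ [Ex Ez]]]] HR.
    unfold pushout_cospan_of in *; simpl in *. subst l r x z.
    destruct (Hpushouts _ _ _ p q) as [W [u [v HW]]].
    destruct (pushout_factor HW g1 f2 (proj1 Hpb)) as [h [Hhu Hhv]].
    destruct (zigzag_pushout_along_comparison HQ1 HQ2 HQ (proj1 Hpb) HW Hhu Hhv HR)
      as [w [m [Hpush [Hma Hmb]]]].
    assert (HMh : M _ _ h) by exact (HcompM _ _ _ _ _ _ _ _ _ _ _ _ Hg1 Hf2 Hpb HW Hhu Hhv).
    apply rst_sym, rst_step. exists m. simpl. split; [|now split].
    exact (HMcostable _ _ _ _ _ _ _ _ Hpush HMh).
Qed.
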